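(* Let $\mathcal M=(G,In,Out,Leak)$ be a linear compartmental model with compartmental matrix $A$, and let $i,j$ be distinct compartments with $i\ne1$ and $j\ne1$. Then $$\det\big((\lambda I-A)^{\{1,i\},\{1,j\}}\big)=\lambda^{-1}\det\big((\lambda I-A^*_1)^{i,j}\big).$$
   Context: A linear compartmental model $\mathcal M=(G,In,Out,Leak)$ consists of a finite directed graph $G=(V_G,E_G)$ without multi-edges, compartments $V_G=\{1,\dots,n\}$, and subsets $In,Out,Leak\subseteq V_G$; edge $q\to p$ carries parameter $a_{pq}$ and each $p\in Leak$ carries $a_{0p}$. The compartmental matrix $A$ has $A_{pp}=-\sum_{k:\,p\to k\in E_G}a_{kp}$ (minus $a_{0p}$ if $p\in Leak$), $A_{pq}=a_{pq}$ if $q\to p\in E_G$, $0$ otherwise. $A^*_1$ is the matrix obtained from $A$ by replacing its first column by zeros. For a matrix $B$, $B^{i,j}$ removes row $i$ and column $j$, and $B^{\{1,i\},\{1,j\}}$ removes rows $1,i$ and columns $1,j$. $\lambda$ is an indeterminate. *)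

From HB Require Import structures.
From mathcomp Require Import all_boot all_order all_algebra fraction.
Set Implicit Arguments. Unset Strict Implicit. Unset Printing Implicit Defensive.
Import Order.TTheory GRing.Theory Num.Theory FracField.
Local Open Scope ring_scope.

(* Compartments {1,...,m} are represented by 'I_m, compartment k being the
   ordinal k-1; in particular compartment 1 is ord0.
   The graph G is a relation E : rel 'I_m, with E q p meaning the edge q -> p. *)

Definition compartmental_matrix (R : pzRingType) (m : nat) (E : rel 'I_m)
    (Leak : {set 'I_m}) (a : 'I_m -> 'I_m -> R) (a0 : 'I_m -> R) : 'M[R]_m :=
  \matrix_(p, q)
    if p == q then
      - (\sum_(k | E p k) a k p) - (if p \in Leak then a0 p else 0)
    else if E q p then a p q else 0.

Definition Astar1 (R : pzRingType) (m : nat) (A : 'M[R]_m.+1) : 'M[R]_m.+1 :=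
  \matrix_(p, q) if q == ord0 then 0 else A p q.

(* The submatrix of M obtained by deleting the rows in S and the columns in T,
   remaining rows/columns kept in increasing order; p is the size of the result
   (which must equal m - #|S| = m - #|T| for this to be meaningful). *)
Definition del_submx (R : Type) (m p : nat) (M : 'M[R]_m.+1)
    (S T : {set 'I_m.+1}) : 'M[R]_p :=
  \matrix_(k < p, l < p)
    M (nth ord0 (enum (~: S)) k) (nth ord0 (enum (~: T)) l).

Definition lam (R : idomainType) : {fraction {poly R}} := FracField.tofrac (R := {poly R}) 'X.

Definition embF (R : idomainType) (x : R) : {fraction {poly R}} := FracField.tofrac (x%:P).

Definition lamI_minus (R : idomainType) (m : nat) (B : 'M[R]_m)
  : 'M[{fraction {poly R}}]_m := (lam R)%:M - map_mx (@embF R) B.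

From HB Require Import structures.
From mathcomp Require Import all_boot all_order all_algebra fraction.
Import GRing.Theory FracField.
Local Open Scope ring_scope.

(* Zeroing the first column of A puts lambda e_1 in the first column of
   lambda I - A^*_1.  For i, j <> 1 this column survives (as the first column)
   in the minor of index (i, j), so a Laplace expansion along it yields lambda
   times the minor of index ({1,i}, {1,j}), in which the first column is gone
   and A^*_1 may be replaced by A.  Nothing about the compartmental structure
   of A is used. *)

Lemma enum_setC1_ord0 {m : nat} {i : 'I_m.+1} : i != ord0 ->
  enum (~: [set i]) = ord0 :: enum (~: [set ord0; i]).
Proof.
move=> i0; rewrite /enum_mem -!enumT enum_ordSl /= !inE eq_sym (negPf i0) /=.
congr (_ :: _); apply: eq_in_filter => _ /mapP [x _ ->].
by rewrite !inE.
Qed.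

Lemma card_setC2_ord0 {n : nat} {i : 'I_n.+2} : i != ord0 ->
  #|~: [set ord0; i]| = n.
Proof.
move=> i0; have := cardsC [set ord0; i].
by rewrite cards2 eq_sym i0 card_ord => -[].
Qed.

Lemma nth_enum_setC_notin (T : finType) (x0 : T) (U : {set T}) (k : nat) :
  (k < #|~: U|)%N -> nth x0 (enum (~: U)) k \notin U.
Proof. by move=> kU; rewrite -in_setC -mem_enum mem_nth // -cardE. Qed.

Lemma eq_del_submx (R : Type) (m p : nat) (M N : 'M[R]_m.+1)
    (S T : {set 'I_m.+1}) :
  (p <= #|~: S|)%N -> (p <= #|~: T|)%N ->
  (forall k l, k \notin S -> l \notin T -> M k l = N k l) ->
  del_submx p M S T = del_submx p N S T.
Proof.
move=> pS pT eqMN; apply/matrixP => k l; rewrite !mxE.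
by rewrite eqMN ?nth_enum_setC_notin ?(leq_trans (ltn_ord _)).
Qed.

Lemma del_submx_row'0_col'0 (R : Type) (n : nat) (M : 'M[R]_n.+2)
    (i j : 'I_n.+2) :
  i != ord0 -> j != ord0 ->
  row' ord0 (col' ord0 (del_submx n.+1 M [set i] [set j]))
  = del_submx n M [set ord0; i] [set ord0; j].
Proof.
move=> i0 j0; apply/matrixP => k l.
by rewrite !mxE (enum_setC1_ord0 i0) (enum_setC1_ord0 j0) !lift0.
Qed.

Lemma det_del_submx_col0 (R : comPzRingType) (n : nat) (M : 'M[R]_n.+2)
    (i j : 'I_n.+2) :
  i != ord0 -> j != ord0 -> (forall k, k != ord0 -> M k ord0 = 0) ->
  \det (del_submx n.+1 M [set i] [set j])
  = M ord0 ord0 * \det (del_submx n M [set ord0; i] [set ord0; j]).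
Proof.
move=> i0 j0 col0; set N := del_submx n.+1 M _ _.
have N_col0 k : N k ord0 = if k == ord0 then M ord0 ord0 else 0.
  rewrite mxE (enum_setC1_ord0 i0) (enum_setC1_ord0 j0) /=.
  case: (unliftP ord0 k) => [k'|] -> /=; last by [].
  rewrite col0 //; have := @nth_enum_setC_notin _ ord0 [set ord0; i] k'.
  by rewrite card_setC2_ord0 // ltn_ord !inE negb_or => /(_ isT) /andP[].
rewrite (expand_det_col N ord0) big_ord_recl big1 => [|k _]; last first.
  by rewrite N_col0 mul0r.
rewrite N_col0 eqxx addr0 /cofactor /= expr0 mul1r.
by rewrite del_submx_row'0_col'0.
Qed.

Lemma lam_neq0 (R : idomainType) : lam R != 0.
Proof. by rewrite tofrac_eq0 polyX_eq0. Qed.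

Lemma lamI_minus_Astar1_col0 (R : idomainType) (m : nat) (B : 'M[R]_m.+1)
    (p : 'I_m.+1) :
  lamI_minus (Astar1 B) p ord0 = lam R *+ (p == ord0).
Proof. by rewrite !mxE eqxx /embF polyC0 tofrac0 subr0. Qed.

Lemma lamI_minus_Astar1 (R : idomainType) (m : nat) (B : 'M[R]_m.+1)
    (p q : 'I_m.+1) :
  q != ord0 -> lamI_minus (Astar1 B) p q = lamI_minus B p q.
Proof. by move=> q0; rewrite !mxE (negPf q0). Qed.

Theorem lemma3p10 (R : idomainType) (n : nat) (E : rel 'I_n.+1)
    (In Out Leak : {set 'I_n.+1})
    (a : 'I_n.+1 -> 'I_n.+1 -> R) (a0 : 'I_n.+1 -> R)
    (i j : 'I_n.+1) :
  i != j -> i != ord0 -> j != ord0 ->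
  let A := compartmental_matrix E Leak a a0 in
  \det (del_submx n.-1 (lamI_minus A) [set ord0; i] [set ord0; j])
  = (lam R)^-1 * \det (del_submx n (lamI_minus (Astar1 A)) [set i] [set j]).
Proof.
move=> _ i0 j0 A; case: n => [|n] in E In Out Leak a a0 i j i0 j0 A *.
  by move: i0; rewrite (ord1 i).
rewrite det_del_submx_col0 // => [|k k0]; last first.
  by rewrite lamI_minus_Astar1_col0 (negPf k0).
rewrite lamI_minus_Astar1_col0 eqxx mulKf ?lam_neq0 //.
congr (\det _); apply: eq_del_submx; rewrite ?card_setC2_ord0 // => k l _.
by rewrite !inE negb_or => /andP[l0 _]; rewrite lamI_minus_Astar1.
Qed.
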